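(* Consider the two-evaluator model described in the context with $d=2$ attributes, fraction of disadvantaged applicants $\alpha=1/2$, and $\lambda=1/2$ (exactly one of the two attributes is protected). Then for every bias factor $\beta\in[0,1)$, every bias probability $\gamma\in(0,1)$, every even $n\ge 2$ and every continuous distribution $\mathcal D$ on $[0,\infty)$, segmented allocation incurs a top-1 error no larger than holistic allocation: $\mathrm{err}_{\mathrm{seg}}\le \mathrm{err}_{\mathrm{hol}}$.
   Context: Model. There are $n$ applicants (with $n$ even) and $d=2$ attributes. A fixed set $\mathcal I_D\subseteq[n]$ of $n/2$ applicants is ''disadvantaged''; the remaining set $\mathcal I_A=[n]\setminus\mathcal I_D$ is ''advantaged''. The two attributes of each applicant have identical true value: $x_{i1}=x_{i2}=:x_i$, where $x_1,\dots,x_n$ are i.i.d. from a continuous distribution $\mathcal D$ supported on $[0,\infty)$. A fraction $\lambda$ of the attributes are ''protected'' (for $d=2$: $\lambda=1/2$ means a specified one of the two attributes is protected, $\lambda=1$ means both are). There are two evaluators; each is independently ''biased'' with probability $\gamma$, independently of everything else. An unbiased evaluator assigned attribute $j$ of applicant $i$ reports $y_{ij}=x_{ij}$; a biased evaluator reports $y_{ij}=\beta x_{ij}$ if $j$ is protected and $i\in\mathcal I_D$, and $y_{ij}=x_{ij}$ otherwise, where $\beta\in[0,1)$. Each (applicant, attribute) pair is evaluated by exactly one evaluator. Holistic allocation: the applicants are split uniformly at random into two sets of size $n/2$, and each evaluator evaluates both attributes of the applicants in one set. Segmented allocation: uniformly at random, one evaluator evaluates attribute 1 of all applicants and the other evaluates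 attribute 2 of all applicants. Assignments are independent of the values and of which evaluators are biased. The top-1 error of an allocation scheme is $\mathrm{err}=\mathbb P\big(\arg\max_{i\in[n]} x_i\neq \arg\max_{i\in[n]}(y_{i1}+y_{i2})\big)$ under that scheme; $\mathrm{err}_{\mathrm{hol}}$ and $\mathrm{err}_{\mathrm{seg}}$ denote the errors under holistic and segmented allocation. *)

From HB Require Import structures.
From mathcomp Require Import all_boot all_order all_algebra.
From mathcomp Require Import all_classical all_reals all_analysis.
Set Implicit Arguments. Unset Strict Implicit. Unset Printing Implicit Defensive.
Import Order.TTheory GRing.Theory Num.Theory.
Local Open Scope classical_set_scope.
Local Open Scope ring_scope.

Section TwoEvaluators.
Variable R : realType.

(* Mutual independence of the n real random variables X_0..X_{n-1}:
   product rule for every family of Borel sets (taking B i = setT recovers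
   every subfamily). *)
Definition mutually_independent d (T : measurableType d) (P : probability T R)
  n (X : 'I_n -> {RV P >-> R}) : Prop :=
  forall B : 'I_n -> set R, (forall i, measurable (B i)) ->
    fine (P [set t | forall i, B i (X i t)]) =
    \prod_(i < n) fine (P (X i @^-1` B i)).

Definition has_law d (T : measurableType d) (P : probability T R)
  n (X : 'I_n -> {RV P >-> R}) (D : probability R R) : Prop :=
  forall i (B : set R), measurable B -> P (X i @^-1` B) = D B.

Definition continuous_nonneg_distribution (D : probability R R) : Prop :=
  (forall r : R, D [set r] = 0%E) /\ D [set r : R | 0 <= r] = 1%E.

Definition top1_correct n (x s : 'I_n -> R) : Prop :=
  exists i : 'I_n, (forall j, j != i -> x j < x i) /\ (forall j, j != i -> s j < s i).

Variables (n : nat) (ID : {set 'I_n}) (beta gamma : R).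

Definition wbias (b : bool) : R := if b then gamma else 1 - gamma.

(* Attribute 1 is the protected attribute, attribute 2 unprotected.
   y_i1 + y_i2 where y_i1 is reported by the evaluator whose bias flag is b. *)
Definition total_score (b : bool) (x : 'I_n -> R) (i : 'I_n) : R :=
  (if b && (i \in ID) then beta * x i else x i) + x i.

(* Holistic: evaluator 1 (bias flag b1) evaluates both attributes of the
   applicants in S, evaluator 2 (flag b2) those of the complement. *)
Definition score_hol (S : {set 'I_n}) (b1 b2 : bool) (x : 'I_n -> R) (i : 'I_n) : R :=
  total_score (if i \in S then b1 else b2) x i.

(* Segmented: if c then evaluator 1 evaluates attribute 1 of everyone,
   else evaluator 2 does. *)
Definition score_seg (c b1 b2 : bool) (x : 'I_n -> R) (i : 'I_n) : R :=
  total_score (if c then b1 else b2) x i.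

Definition err_event d (T : measurableType d) (P : probability T R)
  (X : 'I_n -> {RV P >-> R}) (score : ('I_n -> R) -> 'I_n -> R) : set T :=
  [set t | ~ top1_correct (fun i => X i t) (score (fun i => X i t))].

(* Law of total probability over the independent discrete randomness
   (bias flags b1 b2 ~ Bernoulli(gamma), uniform split S with #|S| = n/2). *)
Definition err_hol d (T : measurableType d) (P : probability T R)
  (X : 'I_n -> {RV P >-> R}) : R :=
  \sum_(b1 : bool) \sum_(b2 : bool) \sum_(S : {set 'I_n} | #|S| == n./2)
    (wbias b1 * wbias b2 / ('C(n, n./2))%:R) * fine (P (err_event X (score_hol S b1 b2))).

(* bias flags as above, uniform choice c of which evaluator gets attribute 1 *)
Definition err_seg d (T : measurableType d) (P : probability T R)
  (X : 'I_n -> {RV P >-> R}) : R :=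
  \sum_(b1 : bool) \sum_(b2 : bool) \sum_(c : bool)
    (wbias b1 * wbias b2 / 2) * fine (P (err_event X (score_seg c b1 b2))).

End TwoEvaluators.

From HB Require Import structures.
From mathcomp Require Import all_boot all_order all_algebra.
From mathcomp Require Import all_classical all_reals all_analysis.
From mathcomp Require Import ring lra.
Import Order.TTheory GRing.Theory Num.Theory.
Local Open Scope classical_set_scope.
Local Open Scope ring_scope.

(* Write e_b for the error probability when a single evaluator with bias flag
   b scores every applicant.  With flags (b, b) both schemes err with
   probability e_b; with mixed flags, segmented allocation errs with
   probability (e_1 + e_0) / 2, while holistic allocation with split S uses
   one of two mixed scorings.  Unbiased scores are 2 x, so the unbiased
   scoring is correct whenever any scoring is; and when both mixed scorings
   are correct they select the same applicant, who then also wins under the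
   fully biased scoring (this needs beta >= 0).  Hence the error event of
   the unbiased scoring lies in the intersection, and that of the biased
   scoring in the union, of the two mixed error events, so inclusion-exclusion
   gives e_1 + e_0 <= P(mixed error 1) + P(mixed error 2) for every S.  The
   comparison holds value by value, so independence, the common law and its
   continuity are never used. *)

Section ProbabilityFine.
Context d (T : measurableType d) (R : realType) (P : probability T R).

Lemma probability_fineK (A : set T) : measurable A -> P A = (fine (P A))%:E.
Proof. by move=> mA; rewrite fineK // fin_num_measure. Qed.

Lemma fine_probability_le (A B : set T) :
  measurable A -> measurable B -> A `<=` B -> fine (P A) <= fine (P B).
Proof.
move=> mA mB AB; rewrite -lee_fin -!probability_fineK //.
by apply: le_measure => //; rewrite inE.
Qed.

Lemma fine_probabilityUI (A B : set T) : measurable A -> measurable B ->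
  fine (P (A `|` B)) + fine (P (A `&` B)) = fine (P A) + fine (P B).
Proof.
move=> mA mB; have mAB := measurableI _ _ mA mB.
apply: EFin_inj; rewrite !EFinD -!probability_fineK //; last exact: measurableU.
rewrite measureUfinl //; last by rewrite ltey_eq fin_num_measure.
by rewrite subeK // fin_num_measure.
Qed.

Lemma fine_probability_subUI_le (A B C D : set T) :
  measurable A -> measurable B -> measurable C -> measurable D ->
  C `<=` A `|` B -> D `<=` A `&` B ->
  fine (P C) + fine (P D) <= fine (P A) + fine (P B).
Proof.
move=> mA mB mC mD CAB DAB; rewrite -(fine_probabilityUI A B) //.
have mAuB := measurableU _ _ mA mB; have mAB := measurableI _ _ mA mB.
by apply: lerD; apply: fine_probability_le => //.
Qed.

End ProbabilityFine.

Lemma measurable_ltr d (T : measurableType d) (R : realType) (f g : T -> R) :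
  measurable_fun setT f -> measurable_fun setT g -> measurable [set t | f t < g t].
Proof.
move=> mf mg; have := measurable_realfun.measurable_fun_ltr mf mg measurableT.
move=> /(_ [set true] I); rewrite setTI.
by congr measurable; apply/seteqP; split => t /= /eqP.
Qed.

Lemma measurable_top1_incorrect d (T : measurableType d) (R : realType) n
    (x s : T -> 'I_n -> R) :
  (forall i, measurable_fun setT (x ^~ i)) ->
  (forall i, measurable_fun setT (s ^~ i)) ->
  measurable [set t | ~ top1_correct (x t) (s t)].
Proof.
move=> mx ms.
have -> : [set t | ~ top1_correct (x t) (s t)] =
    ~` \bigcup_(i in [set: 'I_n]) \bigcap_(j in [set j | j != i])
      ([set t | x t j < x t i] `&` [set t | s t j < s t i]).
  apply/seteqP; split => t /= incorrect.
    move=> [i _ win]; apply: incorrect; exists i.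
    by split => j ji; have [] := win j ji.
  move=> [i [xi si]]; apply: incorrect; exists i => // j ji.
  by split; [exact: xi | exact: si].
apply/measurableC/fin_bigcup_measurable; first exact: finite_finset.
move=> i _; apply: fin_bigcap_measurable; first exact: finite_finset.
by move=> j _; apply: measurableI; apply: measurable_ltr.
Qed.

Section TotalScore.
Context (R : realType) (n : nat) (ID : {set 'I_n}) (beta : R).

Lemma measurable_fun_total_score d (T : measurableType d) (x : T -> 'I_n -> R)
    b i :
  (forall j, measurable_fun setT (x ^~ j)) ->
  measurable_fun setT (fun t => total_score ID beta b (x t) i).
Proof.
move=> mx; rewrite /total_score; case: (_ && _);
  apply: measurable_realfun.measurable_funD => //.
exact: measurable_realfun.measurable_funM.
Qed.

Lemma top1_correct_unbiased (x s : 'I_n -> R) :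
  top1_correct x s -> top1_correct x (total_score ID beta false x).
Proof.
case=> i [xi _]; exists i; split => // j ji; rewrite /total_score /=.
by have xji := xi j ji; exact: ltrD.
Qed.

Lemma top1_correct_biased (S : {set 'I_n}) (x : 'I_n -> R) :
  0 <= beta ->
  top1_correct x (score_hol ID beta S true false x) ->
  top1_correct x (score_hol ID beta S false true x) ->
  top1_correct x (total_score ID beta true x).
Proof.
move=> beta_ge0 [i [xi si]] [i' [xi' si']].
have same_winner : i' = i.
  apply/eqP/negPn/negP => i'i.
  by have := xi i' i'i; have := xi' i; rewrite eq_sym => /(_ i'i); lra.
subst i'; exists i; split => // j ji.
move: (si j ji) (si' j ji) (xi j ji).
rewrite /score_hol /total_score /=.
by case: (i \in S); case: (j \in S); case: (i \in ID); case: (j \in ID) => /=; nra.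
Qed.

End TotalScore.

Lemma sum_card_sets_const (V : nmodType) n k (c : V) :
  \sum_(S : {set 'I_n} | #|S| == k) c = c *+ 'C(n, k).
Proof.
rewrite sumr_const -[in RHS](card_ord n) -card_draws.
by congr (_ *+ _); apply: eq_card => S; rewrite inE.
Qed.

Section TwoEvaluatorErrors.
Context (R : realType) (n : nat) (ID : {set 'I_n}) (beta gamma : R).
Context d (T : measurableType d) (P : probability T R) (X : 'I_n -> {RV P >-> R}).

Definition err_single (b : bool) : R :=
  fine (P (err_event X (total_score ID beta b))).

Lemma score_seg_single c b1 b2 :
  score_seg ID beta c b1 b2 = total_score ID beta (if c then b1 else b2).
Proof. by []. Qed.

Lemma score_hol_single S b : score_hol ID beta S b b = total_score ID beta b.
Proof. by apply/funext => x; apply/funext => i; rewrite /score_hol if_same. Qed.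

Lemma measurable_err_hol S b1 b2 :
  measurable (err_event X (score_hol ID beta S b1 b2)).
Proof.
apply: measurable_top1_incorrect => i; first exact: measurable_funPT.
by apply: measurable_fun_total_score => j; exact: measurable_funPT.
Qed.

Lemma err_single_le_hol_mixed S : 0 <= beta ->
  err_single true + err_single false <=
    fine (P (err_event X (score_hol ID beta S true false))) +
    fine (P (err_event X (score_hol ID beta S false true))).
Proof.
move=> beta_ge0; rewrite /err_single -!(score_hol_single S).
apply: fine_probability_subUI_le; try exact: measurable_err_hol.
- move=> t /= incorrect; apply/not_andP => -[c1 c2]; apply: incorrect.
  by rewrite score_hol_single; exact: top1_correct_biased c1 c2.
- move=> t /= incorrect; split => c; apply: incorrect.
  all: by rewrite score_hol_single; exact: top1_correct_unbiased c.
Qed.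

Lemma err_seg_single :
  err_seg ID beta gamma X = gamma ^+ 2 * err_single true +
    (1 - gamma) ^+ 2 * err_single false +
    gamma * (1 - gamma) * (err_single true + err_single false).
Proof.
rewrite /err_seg !big_bool /= !score_seg_single /wbias.
rewrite -/(err_single true) -/(err_single false).
by field.
Qed.

Let K : R := ('C(n, n./2))%:R.

Lemma binomial_half_neq0 : K != 0.
Proof.
by rewrite pnatr_eq0 -lt0n bin_gt0 leq_half_double -addnn (leqW (leq_addr _ _)).
Qed.

Lemma sum_half_sets_const (c : R) :
  \sum_(S : {set 'I_n} | #|S| == n./2) c = c * K.
Proof. by rewrite sum_card_sets_const mulr_natr. Qed.

Lemma sum_hol_single (w : R) b :
  \sum_(S : {set 'I_n} | #|S| == n./2)
    w / K * fine (P (err_event X (score_hol ID beta S b b))) =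
  w * err_single b.
Proof.
under eq_bigr do rewrite score_hol_single.
by rewrite sum_half_sets_const mulrAC divfK // binomial_half_neq0.
Qed.

Lemma err_single_le_sum_hol_mixed (w : R) : 0 <= beta -> 0 <= w ->
  w * (err_single true + err_single false) <=
    \sum_(S : {set 'I_n} | #|S| == n./2)
      w / K * fine (P (err_event X (score_hol ID beta S true false))) +
    \sum_(S : {set 'I_n} | #|S| == n./2)
      w / K * fine (P (err_event X (score_hol ID beta S false true))).
Proof.
move=> beta_ge0 w_ge0; rewrite -big_split /=.
have -> : w * (err_single true + err_single false) =
    \sum_(S : {set 'I_n} | #|S| == n./2)
      w / K * (err_single true + err_single false).
  by rewrite sum_half_sets_const mulrAC divfK // binomial_half_neq0.
apply: ler_sum => S _; rewrite -mulrDr.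
apply: ler_wpM2l; last exact: err_single_le_hol_mixed.
by rewrite divr_ge0.
Qed.

Lemma err_hol_ge_single : 0 <= beta -> 0 <= gamma <= 1 ->
  gamma ^+ 2 * err_single true + (1 - gamma) ^+ 2 * err_single false +
    gamma * (1 - gamma) * (err_single true + err_single false)
  <= err_hol ID beta gamma X.
Proof.
move=> beta_ge0 /andP[gamma_ge0 gamma_le1].
rewrite /err_hol -/K !big_bool /= !sum_hol_single -!expr2.
rewrite [(1 - gamma) * gamma]mulrC.
rewrite [leLHS]addrAC [leRHS]addrA lerD2r -[leRHS]addrA lerD2l.
by apply: err_single_le_sum_hol_mixed; rewrite // mulr_ge0 // subr_ge0.
Qed.

End TwoEvaluatorErrors.

Theorem theorem1 (R : realType) (n : nat) (ID : {set 'I_n}) (beta gamma : R)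
  (d : measure_display) (T : measurableType d) (P : probability T R)
  (X : 'I_n -> {RV P >-> R}) (D : probability R R) :
  (2 <= n)%N -> ~~ odd n -> #|ID| = n./2 ->
  0 <= beta -> beta < 1 -> 0 < gamma -> gamma < 1 ->
  continuous_nonneg_distribution D ->
  mutually_independent X -> has_law X D ->
  err_seg ID beta gamma X <= err_hol ID beta gamma X.
Proof.
move=> _ _ _ beta_ge0 _ gamma_gt0 gamma_lt1 _ _ _.
rewrite err_seg_single; apply: err_hol_ge_single => //.
by rewrite !ltW.
Qed.
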